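(* Let $n,m,k$ be nonnegative integers with $m\le n$ and $k\ge 1$. If $p$ is a prime with $p>3$, then $$\binom{np^k}{mp^k}\equiv \binom{np^{\lfloor (k-1)/3\rfloor}}{mp^{\lfloor (k-1)/3\rfloor}}\pmod{p^k}.$$ Furthermore, $$\binom{n\cdot 2^k}{m\cdot 2^k}\equiv \binom{n\cdot 2^{\lfloor k/2\rfloor}}{m\cdot 2^{\lfloor k/2\rfloor}}\pmod{2^k}\quad\text{and}\quad \binom{n\cdot 3^k}{m\cdot 3^k}\equiv \binom{n\cdot 3^{\lfloor (k-1)/2\rfloor}}{m\cdot 3^{\lfloor (k-1)/2\rfloor}}\pmod{3^k}.$$
   Context: $\lfloor a\rfloor$ denotes the greatest integer less than or equal to $a$. *)

From mathcomp Require Import all_boot.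

From mathcomp Require Import all_boot all_algebra.
From mathcomp Require Import ring zify.
Import GRing.Theory.

Set Implicit Arguments.
Unset Strict Implicit.
Unset Printing Implicit Defensive.

(* Let q = L p with L a power of p.  Splitting off the multiples of p gives
   (N p)! = p^N N! u(N), and the p-free part u grows blockwise:
   u((c + 1) L) = u(c L) g(c) with g(c) = prod_(1 <= j < q, p !| j) (c q + j).
   Comparing these factorial formulas for C(n L p, m L p) and C(n L, m L), the
   two binomials agree modulo p^e as soon as every block g(c) agrees with the
   unit g(0) modulo p^e.
   Pairing j with q - j gives g(c)^2 = prod (j (q - j) + q^2 c (c + 1)), hence
   g(c)^2 = g(0)^2 modulo q^2, and even modulo q^3 when p >= 5: the first-order
   term q^2 sum 1/(j (q - j)) vanishes, because the sum is invariant under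
   j -> 2 j mod q while each of its terms is divided by 4.  Square roots of
   units congruent modulo p are congruent (losing one factor 2 when p = 2), so
   g(c) = g(0) modulo p^(3(i+1)), 3^(2(i+1)) and 2^(2i+1) for q = p^(i+1).
   Descending one power of p at a time from k to the stated exponent, every
   step is then a congruence modulo p^k. *)

Section RingIdentities.
Local Open Scope ring_scope.
Variable R : comUnitRingType.

Lemma prod_addr_sqr0 (I : Type) (r : seq I) (P : pred I) (a : I -> R) (e : R) :
  e * e = 0 -> (forall i, P i -> a i \is a GRing.unit) ->
  \prod_(i <- r | P i) (a i + e) =
  (\prod_(i <- r | P i) a i) * (1 + e * \sum_(i <- r | P i) (a i)^-1).
Proof.
move=> e2 ua; elim: r => [|x r IH]; first by rewrite !big_nil mulr0 addr0 mulr1.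
rewrite !big_cons; case: ifP => Px; last exact: IH.
rewrite IH; set A := \prod_(i <- r | P i) a i; set S := \sum_(i <- r | P i) _.
have xV := mulrV (ua x Px); set w := (a x)^-1 in xV *.
transitivity (a x * A * (1 + e * (w + S)) + e * A * (1 - a x * w) + e * e * A * S);
  first by ring.
by rewrite xV e2 subrr !(mulr0, mul0r, addr0).
Qed.

(* Q^2 x^-1 only depends on x modulo Q: in Z/q^3 this computes modulo q. *)
Lemma mul_sqr_invr_nilp3 (x y Q t : R) :
  x \is a GRing.unit -> y \is a GRing.unit -> Q ^+ 3 = 0 -> x = y + Q * t ->
  Q ^+ 2 * x^-1 = Q ^+ 2 * y^-1.
Proof.
move=> ux uy Q3 ex; apply/eqP; rewrite -subr_eq0; apply/eqP.
transitivity (Q ^+ 2 * x^-1 * (1 - y * y^-1) - Q ^+ 2 * y^-1 * (1 - x * x^-1)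
              - Q ^+ 3 * t * x^-1 * y^-1); first by rewrite ex; ring.
by rewrite !mulrV // Q3 !subrr !(mulr0, mul0r, subr0).
Qed.

End RingIdentities.

Lemma eq_modn_Zp M a b : 1 < M -> (a%:R : 'Z_M)%R = b%:R%R -> a = b %[mod M].
Proof. by move=> M1 /(congr1 val); rewrite /= !val_Zp_nat. Qed.

Lemma Zp_natr_dvd0 M a : 1 < M -> M %| a -> (a%:R : 'Z_M)%R = 0%R.
Proof. by move=> M1 Ma; apply: val_inj; rewrite /= val_Zp_nat // (eqP Ma). Qed.

Lemma eq_modn_dvd a b d1 d2 : d1 %| d2 -> a = b %[mod d2] -> a = b %[mod d1].
Proof. by move=> d12 ab; rewrite -(modn_dvdm a d12) -(modn_dvdm b d12) ab. Qed.

Lemma eq_modn_mul2r_coprime a b c d :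
  coprime c d -> a * c = b * c %[mod d] -> a = b %[mod d].
Proof.
move=> cd; wlog le_ba : a b / b <= a.
  move=> H; case: (leqP b a) => [|/ltnW] ba; first exact: H.
  by move=> /esym /(H _ _ ba) /esym.
move=> /eqP; rewrite eqn_mod_dvd ?leq_mul2r ?le_ba ?orbT // -mulnBl.
by rewrite Gauss_dvdl 1?coprime_sym // -eqn_mod_dvd // => /eqP.
Qed.

Lemma pexpS_gt1 p i : prime p -> 1 < p ^ i.+1.
Proof. by move=> pp; apply: leq_ltn_trans (ltn_expl _ (prime_gt1 pp)). Qed.

Section FactorialBlocks.
Variable p : nat.
Hypothesis pp : prime p.

Definition pfree_fact N := \prod_(0 <= j < N * p | ~~ (p %| j.+1)) j.+1.

Definition block_prod q c := \prod_(1 <= j < q | ~~ (p %| j)) (c * q + j).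

Lemma prod_pmultiples N : \prod_(0 <= j < N * p | p %| j.+1) j.+1 = p ^ N * N`!.
Proof.
have p0 := prime_gt0 pp; elim: N => [|N IH]; first by rewrite mul0n big_geq.
rewrite mulSn addnC (big_cat_nat _ (leq_addr _ _)) //= IH.
rewrite -(prednK p0) addnS big_mkcond big_nat_recr ?leq_addr //= -big_mkcond /=.
rewrite -addnS prednK // dvdn_addl ?dvdn_mull //= big_nat_cond big1 ?mul1n.
  by rewrite factS expnS; ring.
move=> j /andP[/andP[Nj jp] pj]; move: pj.
rewrite -(subnKC Nj) -addnS dvdn_addr ?dvdn_mull // gtnNdvd //; lia.
Qed.

Lemma fact_mulnp N : (N * p)`! = p ^ N * N`! * pfree_fact N.
Proof.
by rewrite fact_prod big_add1 /= (bigID (fun j => p %| j.+1)) /= prod_pmultiples.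
Qed.

Lemma pfree_factS L c : 0 < L ->
  pfree_fact (c.+1 * L) = pfree_fact (c * L) * block_prod (L * p) c.
Proof.
move=> L0; set q := L * p; have pq : p %| q by rewrite dvdn_mull.
rewrite /pfree_fact mulSnr mulnDl -mulnA -/q (big_cat_nat _ (leq_addr _ _)) //=.
congr (_ * _); rewrite -{1}[c * q]add0n big_addn addKn /block_prod.
have q0 : 0 < q by rewrite muln_gt0 L0 prime_gt0.
rewrite [RHS](_ : _ = \prod_(1 <= j < q.+1 | ~~ (p %| j)) (c * q + j)).
  rewrite big_add1 /=; apply: eq_big => [j|j _]; last by rewrite addnC addnS.
  by rewrite addnC -addnS dvdn_addr // dvdn_mull.
by rewrite [RHS]big_mkcond big_nat_recr //= -big_mkcond /= pq muln1.
Qed.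

Lemma pfree_fact_mod L M N : 0 < L ->
  (forall c, block_prod (L * p) c = block_prod (L * p) 0 %[mod M]) ->
  pfree_fact (N * L) = block_prod (L * p) 0 ^ N %[mod M].
Proof.
move=> L0 blockE; elim: N => [|N IH]; first by rewrite mul0n /pfree_fact big_geq.
by rewrite pfree_factS // expnS mulnC -modnMm IH blockE modnMm.
Qed.

Lemma binom_mulnp_pfree a b : b <= a ->
  'C(a * p, b * p) * (pfree_fact b * pfree_fact (a - b)) = 'C(a, b) * pfree_fact a.
Proof.
move=> ba; have bpap : b * p <= a * p by rewrite leq_mul2r ba orbT.
have bin_ap := bin_fact bpap.
have pa : p ^ a = p ^ b * p ^ (a - b) by rewrite -expnD subnKC.
rewrite -mulnBl !fact_mulnp -(bin_fact ba) pa in bin_ap.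
have Kpos : 0 < p ^ b * p ^ (a - b) * (b`! * (a - b)`!).
  by rewrite !muln_gt0 !expn_gt0 prime_gt0 ?fact_gt0.
apply/eqP; rewrite -(eqn_pmul2l Kpos); apply/eqP.
transitivity ('C(a * p, b * p) * (p ^ b * b`! * pfree_fact b *
              (p ^ (a - b) * (a - b)`! * pfree_fact (a - b)))); first ring.
by rewrite bin_ap; ring.
Qed.

Lemma coprime_block_prod0 q : coprime p (block_prod q 0).
Proof.
rewrite /block_prod; apply: (big_ind (coprime p)) => [|x y|j pj]; first by rewrite coprimen1.
  by rewrite coprimeMr => -> ->.
by rewrite mul0n prime_coprime.
Qed.

Lemma binom_mulnp_mod n m L e : 0 < L -> m <= n ->
  (forall c, block_prod (L * p) c = block_prod (L * p) 0 %[mod p ^ e]) ->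
  'C(n * L * p, m * L * p) = 'C(n * L, m * L) %[mod p ^ e].
Proof.
move=> L0 mn blockE; set g0 := block_prod (L * p) 0.
have pfreeE N := pfree_fact_mod N L0 blockE.
have g0_coprime : coprime (g0 ^ n) (p ^ e).
  by rewrite coprimeXl // coprime_sym coprimeXl // coprime_block_prod0.
apply: (eq_modn_mul2r_coprime g0_coprime).
have g0_split : g0 ^ n = pfree_fact (m * L) * pfree_fact ((n - m) * L) %[mod p ^ e].
  by rewrite -{1}(subnKC mn) expnD -modnMm -!pfreeE modnMm.
rewrite -modnMmr g0_split modnMmr mulnBl binom_mulnp_pfree ?leq_mul2r ?mn ?orbT //.
by rewrite -modnMmr pfreeE modnMmr.
Qed.

Lemma block_prod_sqr q c : p %| q ->
  block_prod q c ^ 2 =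
  \prod_(1 <= j < q | ~~ (p %| j)) (j * (q - j) + q ^ 2 * (c * (c + 1))).
Proof.
move=> pq; rewrite expnS expn1 {2}/block_prod big_nat_rev /=.
have -> : \prod_(1 <= i < q | ~~ (p %| 1 + q - i.+1)) (c * q + (1 + q - i.+1)) =
          \prod_(1 <= i < q | ~~ (p %| i)) (c * q + (q - i)).
  rewrite big_nat_cond [RHS]big_nat_cond; apply: eq_big => i; rewrite add1n subSS //.
  by case: (boolP (1 <= i < q)) => //= /andP[_ /ltnW iq]; rewrite dvdn_subr.
rewrite /block_prod -big_split /= big_nat_cond [RHS]big_nat_cond.
apply: eq_bigr => j /andP[/andP[_ jq] _].
have [r ->] : exists r, q = j + r by exists (q - j); rewrite subnKC // ltnW.
by rewrite addKn; ring.
Qed.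

Lemma block_prod_modq q c : 1 < q -> block_prod q c = block_prod q 0 %[mod q].
Proof.
move=> q1; apply: (eq_modn_Zp q1); rewrite /block_prod !natr_prod.
apply: eq_bigr => j _.
by rewrite natrD natrM (Zp_natr_dvd0 q1 (dvdnn q)) mulr0 add0r mul0n add0n.
Qed.

Lemma block_prod0_le q c : block_prod q 0 <= block_prod q c.
Proof. by apply: leq_prod => j _; rewrite mul0n leq_addl. Qed.

Lemma block_prod_sqr_mod_sqr q c : p %| q -> 1 < q ->
  block_prod q c ^ 2 = block_prod q 0 ^ 2 %[mod q ^ 2].
Proof.
move=> pq q1; have q21 : 1 < q ^ 2 by rewrite (leq_trans q1) // leq_pmulr // ltnW.
apply: (eq_modn_Zp q21); rewrite !block_prod_sqr // mul0n muln0 !natr_prod.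
apply: eq_bigr => j _; rewrite !natrD (Zp_natr_dvd0 q21 (dvdn_mulr _ (dvdnn _))).
by rewrite (Zp_natr_dvd0 q21 (dvdn0 _)).
Qed.

End FactorialBlocks.

Section PairSumModCube.
Variables p i : nat.
Hypotheses (pp : prime p) (p5 : 5 <= p).
Local Notation q := (p ^ i.+1).
Local Notation R := 'Z_(q ^ 3).
Local Open Scope ring_scope.
Local Notation Q := (q%:R : R).

Lemma qcube_gt1 : (1 < q ^ 3)%N.
Proof.
have q1 := pexpS_gt1 i pp.
by rewrite expnS (leq_trans q1) // leq_pmulr // expn_gt0 ltnW.
Qed.

Lemma Zp_qcube_unit m : ~~ (p %| m)%N -> (m%:R : R) \is a GRing.unit.
Proof.
by rewrite (unitZpE _ qcube_gt1) !coprime_pexpl // prime_coprime.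
Qed.

Lemma Zp_qcube_pair_unit j : (j < q)%N -> ~~ (p %| j)%N ->
  ((j * (q - j))%N%:R : R) \is a GRing.unit.
Proof.
move=> jq pj; apply: Zp_qcube_unit; rewrite Euclid_dvdM // negb_or pj /=.
by rewrite dvdn_subr; [|exact: ltnW|exact: dvdn_exp].
Qed.

Lemma qcube_eq0 : Q ^+ 3 = 0.
Proof. by rewrite -natrX (Zp_natr_dvd0 qcube_gt1 (dvdnn _)). Qed.

Lemma pdvdn_double_modq j : (p %| 2 * j %% q)%N = (p %| j)%N.
Proof.
have pq : (p %| q)%N by exact: dvdn_exp.
rewrite /dvdn (modn_dvdm _ pq) -/(dvdn p (2 * j)) Euclid_dvdM //.
by rewrite gtnNdvd // (leq_trans _ p5).
Qed.

Lemma sqr_inv_pair_double j : (j < q)%N -> ~~ (p %| j)%N ->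
  Q ^+ 2 * (((2 * j %% q) * (q - 2 * j %% q))%N%:R)^-1 =
  Q ^+ 2 * (4%:R * (j * (q - j))%N%:R)^-1.
Proof.
move=> jq pj; set r := (2 * j %% q)%N; set k := (2 * j %/ q)%N.
have rq : (r < q)%N by rewrite ltn_pmod // expn_gt0 prime_gt0.
have pr : ~~ (p %| r)%N by rewrite pdvdn_double_modq.
have rE : r%:R = 2%:R * j%:R - k%:R * Q :> R.
  by apply/eqP; rewrite eq_sym subr_eq -!natrM -natrD addnC -divn_eq.
apply: (mul_sqr_invr_nilp3 (t := - (2%:R * j%:R) - k%:R * Q + 4%:R * j%:R * k%:R
                                  - k%:R ^+ 2 * Q)).
- exact: Zp_qcube_pair_unit.
- by rewrite unitrM Zp_qcube_unit ?Zp_qcube_pair_unit // gtnNdvd // (leq_trans _ p5).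
- exact: qcube_eq0.
- by rewrite !natrM !natrB ?(ltnW rq) ?(ltnW jq) // rE; ring.
Qed.

Lemma qsqr_sum_inv_pairs :
  Q ^+ 2 * \sum_(1 <= j < q | ~~ (p %| j)%N) ((j * (q - j))%N%:R)^-1 = 0.
Proof.
have q0 : (0 < q)%N by rewrite expn_gt0 prime_gt0.
pose F j := Q ^+ 2 * ((j * (q - j))%N%:R : R)^-1.
rewrite mulr_sumr.
have -> : \sum_(1 <= j < q | ~~ (p %| j)%N) F j = \sum_(j < q | ~~ (p %| j)%N) F j.
  by rewrite -(big_mkord (fun j => ~~ (p %| j)%N) F) (big_ltn_cond q0) dvdn0.
pose double (j : 'I_q) : 'I_q := Ordinal (ltn_pmod (2 * j) q0).
have double_inj : injective double.
  have coprime2q : coprime 2 q.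
    by rewrite coprime_pexpr // coprime_sym prime_coprime // gtnNdvd // (leq_trans _ p5).
  move=> a b /(congr1 val) /= ab; apply: val_inj.
  have : a = b %[mod q] by apply: (eq_modn_mul2r_coprime coprime2q); rewrite !(mulnC _ 2).
  by rewrite !modn_small.
have u4 : (4%:R : R) \is a GRing.unit.
  by rewrite Zp_qcube_unit // gtnNdvd // (leq_trans _ p5).
have u3 : (3%:R : R) \is a GRing.unit.
  by rewrite Zp_qcube_unit // gtnNdvd // (leq_trans _ p5).
set S := \sum_(j < q | _) F j.
have S_quarter : S = 4%:R^-1 * S.
  rewrite {1}/S (reindex_inj double_inj) /= mulr_sumr.
  apply: eq_big => [j|j pj]; first by rewrite pdvdn_double_modq.
  have pj' : ~~ (p %| j)%N by rewrite -pdvdn_double_modq.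
  rewrite /F sqr_inv_pair_double // (invrM u4 (Zp_qcube_pair_unit (ltn_ord j) pj')).
  by rewrite mulrA [RHS]mulrC.
have S3 : 3%:R * S = 0.
  have S4 : 4%:R * S = S by rewrite {1}S_quarter mulVKr.
  by transitivity (4%:R * S - S); [ring | rewrite S4 subrr].
by apply: (mulrI u3); rewrite S3 mulr0.
Qed.

Lemma block_prod_sqr_mod_cube c :
  (block_prod p q c ^ 2 = block_prod p q 0 ^ 2 %[mod q ^ 3])%N.
Proof.
have pq : (p %| q)%N by exact: dvdn_exp.
apply: (eq_modn_Zp qcube_gt1); rewrite !block_prod_sqr // mul0n muln0 !natr_prod.
set eps := ((q ^ 2 * (c * (c + 1)))%N%:R : R).
have eps2 : eps * eps = 0.
  rewrite -natrM (Zp_natr_dvd0 qcube_gt1) // mulnACA dvdn_mulr //.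
  by rewrite -expnD dvdn_exp2l.
under eq_bigr do rewrite natrD -/eps.
under [RHS]eq_bigr do rewrite addn0.
rewrite big_nat_cond [RHS]big_nat_cond prod_addr_sqr0 //; last first.
  by move=> j /andP[/andP[_ jq] pj]; exact: Zp_qcube_pair_unit.
by rewrite -[X in eps * X]big_nat_cond /eps natrM natrX mulrAC qsqr_sum_inv_pairs
           mul0r addr0 mulr1 big_nat_cond.
Qed.

End PairSumModCube.

Lemma eq_mod_pexp_of_sqr p k x y : prime p -> p != 2 -> y <= x ->
  x = y %[mod p] -> coprime p y -> x ^ 2 = y ^ 2 %[mod p ^ k] -> x = y %[mod p ^ k].
Proof.
move=> pp p_neq2 yx xy_modp py.
have yx2 : y ^ 2 <= x ^ 2 by rewrite leq_exp2r.
move/eqP; rewrite eqn_mod_dvd // subn_sqr => dvd_prod.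
apply/eqP; rewrite eqn_mod_dvd //; move: dvd_prod.
rewrite Gauss_dvdl // coprimeXl // prime_coprime //.
move/eqP: xy_modp; rewrite eqn_mod_dvd // => p_xy.
have -> : x + y = (x - y) + 2 * y by lia.
rewrite dvdn_addr // Euclid_dvdM // negb_or -(prime_coprime y pp) py andbT.
by rewrite dvdn_prime2 // eq_sym.
Qed.

Lemma eq_mod_2exp_of_sqr k x y : y <= x -> x = y %[mod 4] -> odd y ->
  x ^ 2 = y ^ 2 %[mod 2 ^ k.+1] -> x = y %[mod 2 ^ k].
Proof.
move=> yx xy_mod4 oy.
have yx2 : y ^ 2 <= x ^ 2 by rewrite leq_exp2r.
move/eqP; rewrite eqn_mod_dvd // subn_sqr => dvd_prod.
apply/eqP; rewrite eqn_mod_dvd //.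
move/eqP: xy_mod4; rewrite eqn_mod_dvd // => /dvdnP [t xy_t].
have xy_sum : x + y = 2 * (2 * t + y) by lia.
rewrite xy_sum mulnCA expnS dvdn_pmul2l // Gauss_dvdl // in dvd_prod.
by rewrite coprimeXl // prime_coprime // dvdn2 oddD oddM /= oy.
Qed.

Lemma block_prod_mod_of_sqr p i e c : prime p -> p != 2 ->
  block_prod p (p ^ i.+1) c ^ 2 = block_prod p (p ^ i.+1) 0 ^ 2 %[mod p ^ e] ->
  block_prod p (p ^ i.+1) c = block_prod p (p ^ i.+1) 0 %[mod p ^ e].
Proof.
move=> pp p_neq2; apply: eq_mod_pexp_of_sqr => //.
- exact: block_prod0_le.
- have pq : p %| p ^ i.+1 by rewrite dvdn_exp.
  exact: eq_modn_dvd pq (block_prod_modq _ _ (pexpS_gt1 i pp)).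
- exact: coprime_block_prod0.
Qed.

Lemma block_prod_mod_p5 p i c : prime p -> 5 <= p ->
  block_prod p (p ^ i.+1) c = block_prod p (p ^ i.+1) 0 %[mod p ^ (3 * i.+1)].
Proof.
move=> pp p5; apply: block_prod_mod_of_sqr => //; first by case: eqP p5 => // ->.
by rewrite mulnC expnM; exact: block_prod_sqr_mod_cube.
Qed.

Lemma block_prod_mod_3 i c :
  block_prod 3 (3 ^ i.+1) c = block_prod 3 (3 ^ i.+1) 0 %[mod 3 ^ (2 * i.+1)].
Proof.
apply: block_prod_mod_of_sqr => //; rewrite mulnC expnM.
by apply: block_prod_sqr_mod_sqr; [rewrite dvdn_exp | exact: pexpS_gt1].
Qed.

Lemma block_prod_mod_2 i c :
  block_prod 2 (2 ^ i.+1) c = block_prod 2 (2 ^ i.+1) 0 %[mod 2 ^ (2 * i).+1].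
Proof.
case: i => [|i]; first exact: block_prod_modq.
apply: eq_mod_2exp_of_sqr.
- exact: block_prod0_le.
- have dvd4 : 4 %| 2 ^ i.+2 by rewrite !expnS mulnA dvdn_mulr.
  exact: eq_modn_dvd dvd4 (block_prod_modq _ _ (pexpS_gt1 i.+1 (isT : prime 2))).
- have := coprime_block_prod0 (isT : prime 2) (2 ^ i.+2).
  by rewrite prime_coprime // dvdn2 negbK.
- have -> : (2 * i.+1).+2 = i.+2 * 2 by lia.
  rewrite expnM.
  by apply: block_prod_sqr_mod_sqr; [rewrite dvdn_exp | exact: pexpS_gt1].
Qed.

Lemma binom_pexp_descent p n m j k (E : nat -> nat) : prime p -> m <= n -> j <= k ->
  (forall i, j <= i -> k <= E i) ->
  (forall i c, block_prod p (p ^ i.+1) c = block_prod p (p ^ i.+1) 0 %[mod p ^ E i]) ->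
  'C(n * p ^ k, m * p ^ k) = 'C(n * p ^ j, m * p ^ j) %[mod p ^ k].
Proof.
move=> pp mn jk kE blockE; rewrite -{1 2}(subnKC jk).
elim: (k - j) => [|d IH]; first by rewrite addn0.
have L0 : 0 < p ^ (j + d) by rewrite expn_gt0 prime_gt0.
have blockE' c : block_prod p (p ^ (j + d) * p) c = block_prod p (p ^ (j + d) * p) 0
                   %[mod p ^ E (j + d)] by rewrite -expnSr.
rewrite addnS expnSr !mulnA -IH.
exact: eq_modn_dvd (dvdn_exp2l p (kE _ (leq_addr d j))) (binom_mulnp_mod pp L0 mn blockE').
Qed.

Theorem mainTheorem2 (n m k : nat) (hmn : m <= n) (hk : 1 <= k) :
  (forall p : nat, prime p -> 3 < p ->
     'C(n * p ^ k, m * p ^ k) =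
     'C(n * p ^ ((k - 1) %/ 3), m * p ^ ((k - 1) %/ 3)) %[mod p ^ k])
  /\ 'C(n * 2 ^ k, m * 2 ^ k) =
     'C(n * 2 ^ (k %/ 2), m * 2 ^ (k %/ 2)) %[mod 2 ^ k]
  /\ 'C(n * 3 ^ k, m * 3 ^ k) =
     'C(n * 3 ^ ((k - 1) %/ 2), m * 3 ^ ((k - 1) %/ 2)) %[mod 3 ^ k].
Proof.
split; [|split].
- move=> p pp p3; have p5 : 5 <= p.
    by rewrite ltn_neqAle p3 andbT; apply: contraTneq pp => <-.
  apply: (binom_pexp_descent (E := fun i => 3 * i.+1)) => //; first lia.
    by move=> i; lia.
  by move=> i c; exact: block_prod_mod_p5.
- apply: (binom_pexp_descent (E := fun i => (2 * i).+1)) => //; first lia.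
    by move=> i; lia.
  exact: block_prod_mod_2.
- apply: (binom_pexp_descent (E := fun i => 2 * i.+1)) => //; first lia.
    by move=> i; lia.
  exact: block_prod_mod_3.
Qed.
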